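(* Let $G$ be a finite group with identity $e$ and $H$ a normal subgroup of $G$. Then $\Gamma_{G,H}$ admits a total perfect code if and only if one of the following holds: (1) $|H|=2$, and every $x\in G\setminus H$ with $x^2\in H$ is an involution; (2) there exist $n\ge 0$ and an isomorphism $G\cong\mathbb{Z}_2^n\times\mathbb{Z}_3$ mapping $H$ onto $\{0\}^n\times\mathbb{Z}_3=\{(0,\dots,0,0),(0,\dots,0,1),(0,\dots,0,2)\}$.
   Context: For a normal subgroup $H$ of a finite group $G$ with identity $e$, the subgroup sum graph $\Gamma_{G,H}$ is the simple undirected graph with vertex set $G$ in which distinct vertices $x,y$ are adjacent if and only if $xy\in H\setminus\{e\}$. A total perfect code in a graph is a set $C$ of vertices such that every vertex of the graph (whether in $C$ or not) has exactly one neighbour in $C$. An involution is an element of order exactly $2$. *)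

From HB Require Import structures.
From mathcomp Require Import all_boot all_algebra all_fingroup all_solvable.
Set Implicit Arguments. Unset Strict Implicit. Unset Printing Implicit Defensive.
Local Open Scope group_scope.

Definition ssg_adj (gT : finGroupType) (G H : {set gT}) (x y : gT) : bool :=
  [&& x \in G, y \in G, x != y & x * y \in H^#].

Definition total_perfect_code (gT : finGroupType) (G H C : {set gT}) : Prop :=
  C \subset G /\ forall v, v \in G -> #|[set c in C | ssg_adj G H v c]| = 1%N.

Definition has_tpc (gT : finGroupType) (G H : {set gT}) : Prop :=
  exists C : {set gT}, total_perfect_code G H C.

From HB Require Import structures.
From mathcomp Require Import all_boot all_algebra all_fingroup all_solvable.
From mathcomp Require Import zify.
Set Implicit Arguments. Unset Strict Implicit. Unset Printing Implicit Defensive.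
Local Open Scope group_scope.

(* The neighbourhood of a vertex v in Gamma_{G,H} is (v^-1 H) minus {v^-1, v}.
   If C is a total perfect code and d is the C-neighbour of 1, then the C-neighbour
   of d is 1, and a vertex y in H \ {1, d, d^-1} would have the two C-neighbours 1
   and d; hence H = {1, d, d^-1} has order 2 or 3.  For |H| = 2 the code condition
   at x outside H with x^2 in H forces x^2 = 1.  For |H| = 3, if every w in a coset
   X = xH had w^2 outside H or w^2 = 1, then the C-neighbours of the w^-1 would be
   the sets (C :&: X) minus w, each of size 1, which is impossible for |X| = 3.
   This rules out both x^2 outside H and x inverting H, so G/H has exponent 2 and H
   is central, whence G is abelian and G = 'Ldiv_2(G) x H, the first factor being
   elementary abelian.  Conversely, C = G works when |H| = 2, and for H of order 3
   generated by d the set of x with x^2 <> d is a total perfect code. *)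

Lemma card_setD1_eq1_le2 (T : finType) (B X : {set T}) :
  B \subset X -> {in X, forall w, #|B :\ w| = 1%N} -> #|X| <= 2.
Proof.
move=> sBX BX1; rewrite leqNgt; apply/negP => X3.
have [w0 Xw0] : exists w, w \in X.
  by apply/set0Pn; rewrite -card_gt0 (leq_trans _ X3).
have /set0Pn [b /setD1P [_ Bb]] : B :\ w0 != set0 by rewrite -card_gt0 BX1.
have B2 : #|B| = 2 by rewrite (cardsD1 b) Bb BX1 ?(subsetP sBX).
have /subsetPn [w Xw nBw] : ~~ (X \subset B).
  by apply: contraL X3 => /subset_leq_card; rewrite B2 -leqNgt.
have BwB : B :\ w = B.
  by apply/setP => y; rewrite !inE andb_idl // => By; apply: contraNneq nBw => <-.
by have := BX1 w Xw; rewrite BwB B2.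
Qed.

Lemma rV2_abelem n : 2.-abelem [set: 'rV['Z_2]_n].
Proof.
by apply: (@fin_lmod_pchar_abelem 2 'Z_2 'rV['Z_2]_n); apply: (pchar_Fp (p := 2)).
Qed.

Section GroupLemmas.
Variable gT : finGroupType.
Implicit Types x y h : gT.

Lemma expg2_mulJ x h : (x * h) ^+ 2 = x ^+ 2 * (h ^ x * h).
Proof. by rewrite !expgS !expg0 !mulg1 conjgE !mulgA mulgK. Qed.

Lemma commg_expg2 x y : [~ x, y] = (x ^+ 2)^-1 * (x * y^-1) ^+ 2 * y ^+ 2.
Proof. by rewrite /commg conjgE !expgS !expg0 !mulg1 !invMg !mulgA !mulgKV. Qed.

Lemma odd_expg2_eq1 (H : {group gT}) h :
  odd #|H| -> h \in H -> h ^+ 2 = 1 -> h = 1.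
Proof.
move=> oddH Hh h2; apply/eqP; rewrite -order_eq1 -dvdn1.
have /eqP <- : coprime 2 #|H| by rewrite coprime2n.
by rewrite dvdn_gcd order_dvdn h2 eqxx order_dvdG.
Qed.

Lemma order3_powers (H : {group gT}) : #|H| = 3 ->
  exists d, [/\ d \in H, #[d] = 3
              & forall y, y \in H -> exists2 i, i < 3 & y = d ^+ i].
Proof.
move=> H3; have /card_gt0P[d /setD1P[d1 Hd]] : 0 < #|H^#|.
  by move: H3; rewrite (cardsD1 1) group1 add1n => -[->].
have od : #[d] = 3 by apply: nt_prime_order; rewrite // -H3 expg_cardG.
have defH : <[d]> = H by apply/eqP; rewrite eqEcard cycle_subG Hd -orderE od H3.
exists d; split => // y; rewrite -defH => /cycleP[i ->].
by exists (i %% 3); rewrite ?ltn_pmod // -od expg_mod_order.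
Qed.

End GroupLemmas.

Definition abelian_sqr_order3 (gT : finGroupType) (G H : {set gT}) :=
  [/\ abelian G, #|H| = 3 & {in G, forall x, x ^+ 2 \in H}].

Definition Z2n_Z3_isom (gT : finGroupType) (G H : {set gT}) :=
  exists n, exists f : {morphism G >-> ('rV['Z_2]_n * 'Z_3)%type},
    isom G [set: ('rV['Z_2]_n * 'Z_3)%type] f
    /\ f @* H = [set u : ('rV['Z_2]_n * 'Z_3)%type | u.1 == 0%R].

Section SubgroupSumGraph.
Variables (gT : finGroupType) (G H : {group gT}).
Hypothesis nsHG : H <| G.

Let sHG : H \subset G := normal_sub nsHG.

Lemma ssg_adjE v c : v \in G -> ssg_adj G H v c = (v != c) && (v * c \in H^#).
Proof.
move=> Gv; rewrite /ssg_adj Gv /=; case Hvc: (v * c \in H^#); rewrite ?andbF //.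
move: Hvc => /setD1P[_ /(subsetP sHG) Gvc].
by rewrite -(mulKg v c) groupM ?groupV.
Qed.

Lemma lcoset_expg2 x w : x \in G -> w \in x *: H -> (w ^+ 2 \in H) = (x ^+ 2 \in H).
Proof.
move=> Gx; rewrite mem_lcoset => Hxw; rewrite -(mulKVg x w) expg2_mulJ.
by rewrite groupMr // groupM // memJ_norm // (subsetP (normal_norm nsHG)).
Qed.

Section TotalPerfectCode.
Variable C : {set gT}.
Hypothesis tpcC : total_perfect_code G H C.

Lemma tpc_neighbour v : v \in G -> exists2 c, c \in C & ssg_adj G H v c.
Proof.
move=> Gv; have /card_gt0P[c] : 0 < #|[set c in C | ssg_adj G H v c]|.
  by rewrite tpcC.2.
by rewrite inE => /andP[]; exists c.
Qed.

Lemma tpc_neighbour_uniq v a b : v \in G -> a \in C -> b \in C ->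
  ssg_adj G H v a -> ssg_adj G H v b -> a = b.
Proof.
move=> Gv Ca Cb va vb; apply: (card_le1_eqP (eq_leq (tpcC.2 v Gv))).
  by rewrite inE Cb vb.
by rewrite inE Ca va.
Qed.

Lemma tpc_subH : exists2 d, d \in H^# & H \subset [set 1; d; d^-1].
Proof.
have G1 := group1 G.
have [d Cd] := tpc_neighbour G1; rewrite ssg_adjE // mul1g => /andP[_ H1d].
have /setD1P[d1 Hd] := H1d; have Gd := subsetP sHG d Hd.
have [e Ce] := tpc_neighbour Gd; rewrite ssg_adjE // => /andP[de /setD1P[de1 Hde]].
have He : e \in H by rewrite -(mulKg d e) groupM ?groupV.
have C1 : 1 \in C.
  case: (eqVneq e 1) => [<- // | e1]; suff ed : e = d by rewrite ed eqxx in de.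
  by apply: (tpc_neighbour_uniq G1) => //;
    rewrite ssg_adjE // mul1g !inE eq_sym ?e1 ?He ?d1.
exists d => //; apply/subsetP => y Hy; rewrite !inE.
apply: contraT; rewrite !negb_or => /andP[/andP[y1 yd] ydV].
suff d_eq1 : 1 = d by rewrite -d_eq1 eqxx in d1.
have Gy := subsetP sHG y Hy.
apply: (tpc_neighbour_uniq Gy) => //; rewrite ssg_adjE //.
  by rewrite mulg1 !inE y1 Hy.
by rewrite yd !inE mulg_eq1 ydV groupM.
Qed.

Lemma tpc_card : 1 < #|H| <= 3.
Proof.
have [d H1d sH] := tpc_subH; apply/andP; split.
  by rewrite (cardsD1 1) group1 ltnS card_gt0; apply/set0Pn; exists d.
apply: leq_trans (subset_leq_card sH) _.
apply: leq_trans (leq_card_setU _ _) _; rewrite cards1 addn1 ltnS.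
by apply: leq_trans (leq_card_setU _ _) _; rewrite !cards1.
Qed.

Lemma tpc_involutions : #|H| = 2 ->
  forall x, x \in G :\: H -> x ^+ 2 \in H -> #[x] = 2.
Proof.
move=> H2 x /setDP[Gx nHx] Hx2; have [d H1d _] := tpc_subH.
have H1E : H^# = [set d].
  apply/esym/eqP; rewrite eqEcard sub1set H1d cards1.
  by move: H2; rewrite (cardsD1 1) group1 add1n => -[->].
apply: nt_prime_order => //; last by apply: contraNneq nHx => ->.
apply/eqP; apply: contraT => x2.
have [s Cs] := tpc_neighbour Gx; rewrite ssg_adjE // H1E inE => /andP[xs /eqP xsd].
have : x ^+ 2 \in H^# by rewrite !inE x2.
by rewrite H1E inE -xsd expgS expg1 => /eqP/mulgI xxs; rewrite xxs eqxx in xs.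
Qed.

Lemma tpc_coset_expg2 x : 2 < #|H| -> x \in G ->
  ~ {in x *: H, forall w, w ^+ 2 \in H -> w ^+ 2 = 1}.
Proof.
move=> H3 Gx sqr1; suff : #|x *: H| <= 2 by rewrite card_lcoset leqNgt H3.
apply: (@card_setD1_eq1_le2 _ (C :&: x *: H)) => [|w xHw]; first exact: subsetIr.
have Gw : w \in G.
  by move: xHw; rewrite mem_lcoset => /(subsetP sHG) ?; rewrite -(mulKVg x w) groupM.
have /lcoset_eqP wH := xHw.
have wV : w^-1 \in x *: H -> w^-1 = w.
  rewrite -wH mem_lcoset -invMg groupV -(expgS w 1) => /(sqr1 _ xHw) /eqP.
  by rewrite expgS expg1 -eq_invg_mul => /eqP.
(* The neighbours of w^-1 are the c in X other than w: the excluded vertex w^-1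
   either lies outside X or equals w. *)
rewrite -(tpcC.2 _ (groupVr Gw)); apply: eq_card => c.
rewrite !inE ssg_adjE ?groupV // !inE -mem_lcoset wH -eq_mulVg1.
have [-> | _] := eqVneq c w^-1; last by rewrite /= (eq_sym w) andbCA.
by case: (boolP (w^-1 \in x *: H)) => [/wV -> | ]; rewrite /= ?eqxx ?andbF.
Qed.

Lemma tpc_expg2_mem x : 2 < #|H| -> x \in G -> x ^+ 2 \in H.
Proof.
move=> H3 Gx; apply: contraT => nHx2; exfalso.
apply: (tpc_coset_expg2 H3 Gx) => w xHw.
by rewrite (lcoset_expg2 Gx xHw) (negbTE nHx2).
Qed.

Hypothesis H3 : #|H| = 3.

Let H_gt2 : 2 < #|H|. Proof. by rewrite H3. Qed.
Let oddH : odd #|H|. Proof. by rewrite H3. Qed.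

Lemma tpc_centH : G \subset 'C(H).
Proof.
have [d /setD1P[d1 Hd] sH] := tpc_subH.
have memH y : y \in H -> [\/ y = 1, y = d | y = d^-1].
  move/(subsetP sH); rewrite !inE => /orP[/orP[]|] /eqP.
  - exact: Or31.
  - exact: Or32.
  - exact: Or33.
apply/subsetP => x Gx; have nHx := subsetP (normal_norm nsHG) x Gx.
have : d ^ x \in H by rewrite memJ_norm.
case/memH => [/eqP | dx | dxV]; first by rewrite conjg_eq1 (negbTE d1).
  have cxd : commute x d by apply/esym/commgP/conjg_fixP.
  by apply/centP => y /memH[] ->; [exact: commute1 | | exact: commuteV].
have invH y : y \in H -> y ^ x = y^-1.
  by case/memH => ->; rewrite ?conj1g ?invg1 // ?conjVg dxV.
have x2 : x ^+ 2 = 1.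
  have Hx2 := tpc_expg2_mem H_gt2 Gx.
  apply: (odd_expg2_eq1 oddH Hx2); apply/eqP; rewrite expgS expg1 -eq_invg_mul.
  by rewrite -invH // conjXg conjgE mulKg.
exfalso; apply: (tpc_coset_expg2 H_gt2 Gx) => w; rewrite mem_lcoset => Hxw _.
by rewrite -(mulKVg x w) expg2_mulJ x2 mul1g invH ?mulVg.
Qed.

Lemma tpc_abelian : abelian G.
Proof.
have cGH := tpc_centH; have sqrH := tpc_expg2_mem H_gt2.
apply/centsP => a Ga b Gb; apply/commgP.
have Hab : [~ a, b] \in H.
  have Gab : a * b^-1 \in G by rewrite groupM ?groupV.
  by rewrite commg_expg2; apply: groupM; [apply: groupM; rewrite ?groupV |]; apply: sqrH.
apply/eqP/(odd_expg2_eq1 oddH Hab); rewrite -commgX.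
  by apply/eqP/commgP/(centP (subsetP cGH a Ga)); rewrite sqrH.
exact: (centP (subsetP cGH b Gb)).
Qed.

End TotalPerfectCode.

Lemma tpc_cases : has_tpc G H ->
  (#|H| = 2 /\ forall x, x \in G :\: H -> x ^+ 2 \in H -> #[x] = 2)
  \/ abelian_sqr_order3 G H.
Proof.
case=> C tpcC; have /andP[H_gt1 H_le3] := tpc_card tpcC.
have [H2 | H3] : #|H| = 2 \/ #|H| = 3 by lia.
  by left; split => //; apply: (tpc_involutions tpcC H2).
right; split => //; first exact: (tpc_abelian tpcC H3).
by move=> x; apply: (tpc_expg2_mem tpcC); rewrite H3.
Qed.

Lemma involutions_tpc : #|H| = 2 ->
  (forall x, x \in G :\: H -> x ^+ 2 \in H -> #[x] = 2) -> has_tpc G H.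
Proof.
move=> H2 invol; have [h H1E] : exists h, H^# = [set h].
  by apply/cards1P; move: H2; rewrite (cardsD1 1) group1 add1n => -[->].
have /setD1P[h1 Hh] : h \in H^# by rewrite H1E set11.
have Gh := subsetP sHG h Hh.
have sqr_neq v : v \in G -> v ^+ 2 != h.
  move=> Gv; apply: contraNneq h1 => v2h; rewrite -v2h.
  have [Hv | nHv] := boolP (v \in H); first by rewrite -H2 expg_cardG.
  have GHv : v \in G :\: H by rewrite inE nHv.
  by rewrite -(invol v GHv) ?expg_order ?v2h.
exists G; split => // v Gv; apply: (@eq_card1 _ (v^-1 * h)) => c.
rewrite !inE ssg_adjE // H1E !inE.
apply/idP/idP => [/and3P[_ _ /eqP <-] | /eqP ->]; first by rewrite mulKg.
rewrite mulKVg eqxx groupM ?groupV //= andbT.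
by apply: contra (sqr_neq v Gv) => /eqP e; rewrite expgS expg1 {2}e mulKVg.
Qed.

Lemma abelian_sqr_order3_tpc : abelian_sqr_order3 G H -> has_tpc G H.
Proof.
case=> cGG H3 sqrH; have [d [Hd od Hpow]] := order3_powers H3.
have Gd := subsetP sHG d Hd.
have dE i k : (d ^+ i == d ^+ k) = (i == k %[mod 3]) by rewrite eq_expg_mod_order od.
exists [set x in G | x ^+ 2 != d]; split => [|v Gv].
  by apply/subsetP => x /setIdP[].
have [m m3 vm] := Hpow _ (sqrH v Gv).
apply: (@eq_card1 _ (v^-1 * d ^+ (if m == 1%N then 2 else 1)%N)) => c.
have [y ->] : exists y, c = v^-1 * y by exists (v * c); rewrite mulKg.
have vE : (v == v^-1 * y) = (v ^+ 2 == y) by rewrite -(inj_eq (mulgI v)) mulKVg.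
rewrite !inE ssg_adjE // mulKVg (inj_eq (mulgI _)) vE vm !inE.
have [Hy | nHy] := boolP (y \in H); last first.
  by rewrite !andbF; apply/esym/negbTE; apply: contraNneq nHy => ->; rewrite groupX.
have [i i3 ->] := Hpow y Hy.
have sqrE : ((v^-1 * d ^+ i) ^+ 2 == d) = (d ^+ (i * 2) == d ^+ m.+1).
  rewrite expgMn; last by apply: (centsP cGG); rewrite ?groupV ?groupX.
  by rewrite expgVn vm -expgM -(inj_eq (mulgI (d ^+ m))) mulKVg expgSr.
rewrite sqrE groupM ?groupV ?groupX //= -(expg0 d) !dE.
by clear sqrE vm Hy; case: m m3 => [|[|[|//]]] _; case: i i3 => [|[|[|//]]].
Qed.

Lemma Z2n_Z3_isom_abelian_sqr : Z2n_Z3_isom G H -> abelian_sqr_order3 G H.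
Proof.
case=> n [f [/isomP[injf imfG] imfH]].
have fHE : f @* H = setX 1 [set: 'Z_3] by apply/setP => u; rewrite imfH !inE andbT.
split.
- rewrite -(injm_abelian injf (subxx G)) imfG.
  by apply/centsP => -[u1 u2] _ [w1 w2] _; congr pair; apply: GRing.addrC.
- by rewrite -(card_injm injf sHG) fHE cardsX cards1 cardsT card_ord.
move=> x Gx; rewrite -(injmK injf sHG) mem_morphpre ?groupX // morphX // fHE.
rewrite in_setX in_setT andbT in_set1.
case/abelemP: (rV2_abelem n) => // _ /(_ (f x).1 (in_setT _)).
by rewrite expgS expg1 => ->.
Qed.

Lemma abelian_sqr_Z2n_Z3_isom : abelian_sqr_order3 G H -> Z2n_Z3_isom G H.
Proof.
case=> cGG H3 sqrH.
pose T := Group (group_Ldiv 2 cGG).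
have defG : T \x H = G.
  have sTG : T \subset G := subsetIl _ _.
  rewrite dprodE ?(sub_abelian_cent2 cGG) //.
    apply/eqP; rewrite eqEsubset mul_subG //=; apply/subsetP => x Gx.
    have x3 : (x ^+ 3) ^+ 2 = 1 by rewrite -expgM mulnC expgM -H3 expg_cardG ?sqrH.
    have -> : x = x ^+ 3 * (x ^+ 2)^-1 by rewrite expgS mulgK.
    by rewrite mem_mulg ?groupV ?sqrH // !inE groupX //= x3.
  apply/trivgP/subsetP => x /setIP[/LdivP[_ x2] Hx].
  by rewrite inE (odd_expg2_eq1 _ Hx x2) ?H3.
pose n := logn 2 #|T|.
have /isogP[fT injfT imfT] : T \isog setX [set: 'rV['Z_2]_n] (1 : {set 'Z_3}).
  apply: isog_trans (isog_setX1 _ _).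
  have abT : 2.-abelem T by rewrite exponent2_abelem // -sub_LdivT subsetIr.
  rewrite (isog_abelem_card _ abT) rV2_abelem cardsT card_mx card_ord mul1n /=.
  by rewrite [in X in _ == X](card_pgroup (abelem_pgroup abT)).
have /isogP[fH injfH imfH] : H \isog setX (1 : {set 'rV['Z_2]_n}) [set: 'Z_3].
  apply: isog_trans (isog_set1X _ _).
  by rewrite isog_cyclic_card ?prime_cyclic ?cardsT ?card_ord ?H3.
have [_ _ cX trX] := dprodP (setX_dprod [set: 'rV['Z_2]_n]%G [set: 'Z_3]%G).
have cfTH : fH @* H \subset 'C(fT @* T) by rewrite imfT imfH.
exists n, (dprodm_morphism defG cfTH); split.
  apply/isomP; split; first by rewrite injm_dprodm injfT injfH imfT imfH trX eqxx.
  by rewrite im_dprodm imfT imfH setX_prod; apply/setP => u; rewrite !inE.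
by rewrite morphim_dprodmr // imfH; apply/setP => u; rewrite !inE andbT.
Qed.

End SubgroupSumGraph.

Theorem theorem5p2 (gT : finGroupType) (G H : {group gT}) (nHG : H <| G) :
  has_tpc G H <->
  ( (#|H| = 2%N /\ forall x, x \in G :\: H -> x ^+ 2 \in H -> #[x] = 2%N)
  \/ exists n : nat, exists f : {morphism G >-> ('rV['Z_2]_n * 'Z_3)%type},
       isom G [set: ('rV['Z_2]_n * 'Z_3)%type] f
       /\ f @* H = [set u : ('rV['Z_2]_n * 'Z_3)%type | u.1 == 0%R] ).
Proof.
split=> [/(tpc_cases nHG)[order2 | /(abelian_sqr_Z2n_Z3_isom nHG) iso] | ].
- by left.
- by right.
case=> [[H2 invol] | iso]; first exact: involutions_tpc nHG H2 invol.
exact: abelian_sqr_order3_tpc nHG (Z2n_Z3_isom_abelian_sqr nHG iso).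
Qed.
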